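(* Let $\lambda>0$ and $\psi(r)=\frac\lambda2\,\mathrm{dist}(r,\mathbb Z)^2$, and let $y=\hat y+u$ with $u\in\dot{\mathscr W}^{1,2}$ be a locally stable equilibrium. Then $Dy_b\in\mathbb R\setminus(\tfrac12+\mathbb Z)$ for all $b\in\mathcal B$, and $$\sum_{b\in\mathcal B}\psi''(Dy_b)\,Dv_b^2\ge\lambda\|Dv\|_2^2\qquad\text{for all }v\in\dot{\mathscr W}^{1,2}.$$
   Context: $\mathsf R_6$ rotation by $\pi/3$, $a_1=(1,0)^T$, $a_i=\mathsf R_6^{i-1}a_1$, $\Lambda:=(\tfrac12,\tfrac{\sqrt3}{6})^T+\{ma_1+na_2:m,n\in\mathbb Z\}$. Bonds $\mathcal B=\{(\xi,\eta)\in\Lambda^2:|\xi-\eta|=1\}$ (ordered), $Dy_b=y(\eta)-y(\xi)$, $\|Dv\|_2=(\sum_{b\in\mathcal B}|Dv_b|^2)^{1/2}$. $\xi_0=(0,\sqrt3/3)^T$; $\mathscr W_0=\{v:\Lambda\to\mathbb R: v(\xi_0)=0,\ \{b:Dv_b\ne0\}$ bounded$\}$; $\dot{\mathscr W}^{1,2}=\{v: v(\xi_0)=0,\ Dv\in\ell^2(\mathcal B)\}$. $\hat y(x)=\frac1{2\pi}\arg(x)$ on $\Lambda$ (branch cut along the positive $x_1$-axis). For $w\in\mathscr W_0$, $E(y+w;y):=\sum_{b\in\mathcal B}[\psi(Dy_b+Dw_b)-\psi(Dy_b)]$. A displacement $y$ is a locally stable equilibrium if there exists $\epsilon>0$ with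 $E(y+w;y)\ge0$ for all $w\in\mathscr W_0$ with $\|Dw\|_2\le\epsilon$. *)

From HB Require Import structures.
From mathcomp Require Import all_boot all_order all_algebra.
From mathcomp Require Import all_classical all_reals all_analysis.
Set Implicit Arguments. Unset Strict Implicit. Unset Printing Implicit Defensive.
Import Order.TTheory GRing.Theory Num.Theory.
Import numFieldNormedType.Exports.
Local Open Scope classical_set_scope.
Local Open Scope ring_scope.

Section Defs.
Variable R : realType.

(* Lattice sites are indexed by (m, n) : int * int; the site (m,n) is
   (1/2, sqrt3/6) + m a1 + n a2 with a1 = (1,0), a2 = R6 a1 = (1/2, sqrt3/2). *)
Definition site := (int * int)%type.

Definition sqrt3 : R := Num.sqrt 3.

Definition pos1 (x : site) : R := 2^-1 + x.1%:~R + x.2%:~R / 2.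
Definition pos2 (x : site) : R := sqrt3 / 6 + x.2%:~R * (sqrt3 / 2).

Definition sdist (x y : site) : R :=
  Num.sqrt ((pos1 y - pos1 x) ^+ 2 + (pos2 y - pos2 x) ^+ 2).

Definition snorm (x : site) : R := Num.sqrt (pos1 x ^+ 2 + pos2 x ^+ 2).

Definition bond := (site * site)%type.
Definition bonds : set bond := [set b | sdist b.1 b.2 = 1].

Definition D (y : site -> R) (b : bond) : R := y b.2 - y b.1.

Definition xi0 : site := (0%Z, (-1)%Z).

Definition Dnorm2 (v : site -> R) : \bar R :=
  \esum_(b in bonds) ((D v b) ^+ 2)%:E.

Definition W0 (v : site -> R) : Prop :=
  v xi0 = 0 /\
  exists M : R, forall b, bonds b -> D v b != 0 ->
    snorm b.1 <= M /\ snorm b.2 <= M.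

Definition W12 (v : site -> R) : Prop :=
  v xi0 = 0 /\ (Dnorm2 v < +oo)%E.

(* argument of x in [0, 2pi) (branch cut along the positive x1-axis) *)
Definition arg2 (x1 x2 : R) : R :=
  let r := Num.sqrt (x1 ^+ 2 + x2 ^+ 2) in
  if 0 <= x2 then acos (x1 / r) else 2 * pi - acos (x1 / r).

Definition yhat (x : site) : R := (2 * pi)^-1 * arg2 (pos1 x) (pos2 x).

Definition distZ (r : R) : R := inf [set `|r - k%:~R| | k in [set: int]].
Definition psi (lam : R) (r : R) : R := lam / 2 * distZ r ^+ 2.

(* energy difference E(y + w; y) (finite sum for w in W_0) *)
Definition Ediff (lam : R) (y w : site -> R) : R :=
  \sum_(b \in bonds) (psi lam (D y b + D w b) - psi lam (D y b)).

Definition locally_stable (lam : R) (y : site -> R) : Prop :=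
  exists eps : R, 0 < eps /\
    forall w, W0 w -> (Dnorm2 w <= (eps ^+ 2)%:E)%E -> 0 <= Ediff lam y w.

Definition psi2 (lam : R) (r : R) : R := derive1 (derive1 (psi lam)) r.

End Defs.

From HB Require Import structures.
From mathcomp Require Import all_boot all_order all_algebra.
From mathcomp Require Import all_classical all_reals all_analysis.
From mathcomp Require Import ring lra zify.
Import Order.TTheory GRing.Theory Num.Theory.
Import numFieldNormedType.Exports.
Local Open Scope classical_set_scope.
Local Open Scope ring_scope.
Set Implicit Arguments. Unset Strict Implicit.

(* psi is lam-semiconcave: its second difference psi(a+t) + psi(a-t) - 2 psi(a)
   is at most lam t^2, and at a half-integer a, where psi has a concave kink, it is at most
   lam (t^2 - |t|).  If Dy_b were a half-integer, move an endpoint z of b (chosen different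
   from xi0) by t and by -t.  Only the N bonds at z, finitely many, feel this, so the two
   energy changes add up to at most lam t ((N + 1) t - 1) < 0 for small t, contradicting local
   stability.  Away from the half-integers psi is locally the parabola lam/2 (r - k)^2, hence
   psi'' = lam on every bond and the quadratic form equals lam ||Dv||^2. *)

Section Potential.
Variable R : realType.
Implicit Types (lam r a t : R) (k : int).

Lemma distZ_le_dist r k : distZ r <= `|r - k%:~R|.
Proof.
rewrite /distZ; apply: ge_inf; last by exists k.
by exists 0 => _ [j _ <-].
Qed.

Lemma distZ_nearest r k : `|r - k%:~R| <= 2^-1 -> distZ r = `|r - k%:~R|.
Proof.
move=> near_k; apply/eqP; rewrite eq_le distZ_le_dist /=.
apply: lb_le_inf; first by exists `|r - k%:~R|, k.
move=> _ [j _ <-]; have [->//|j_ne_k] := eqVneq j k.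
have jk_ge1 : 1 <= `|j%:~R - k%:~R : R|.
  by rewrite -intrB -intr_norm ler1z -gtz0_ge1 normr_gt0 subr_eq0.
have : `|j%:~R - k%:~R : R| <= `|r - j%:~R| + `|r - k%:~R|.
  rewrite (_ : j%:~R - k%:~R = (r - k%:~R) - (r - j%:~R)); last by ring.
  by rewrite [X in _ <= X]addrC ler_normB.
lra.
Qed.

Lemma nearest_int r : exists k, `|r - k%:~R| <= 2^-1.
Proof.
exists (Num.floor (r + 2^-1)).
have le_r := real_floor_le (num_real (r + 2^-1)).
have gt_r := real_floorD1_gt (num_real (r + 2^-1)).
rewrite intrD in gt_r; move: le_r gt_r; set f := (Num.floor _)%:~R => *.
rewrite ler_norml; apply/andP; split; lra.
Qed.

Lemma distZ_ge0 r : 0 <= distZ r.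
Proof. by have [k /distZ_nearest ->] := nearest_int r. Qed.

Lemma psi_le_parabola lam r k : 0 <= lam -> psi lam r <= lam / 2 * (r - k%:~R) ^+ 2.
Proof.
move=> lam_ge0; apply: ler_wpM2l; first exact: divr_ge0.
rewrite -(real_normK (num_real (r - k%:~R))).
by apply: lerXn2r; rewrite ?nnegrE ?normr_ge0 ?distZ_ge0 ?distZ_le_dist.
Qed.

Lemma psi_nearest lam r k : `|r - k%:~R| <= 2^-1 -> psi lam r = lam / 2 * (r - k%:~R) ^+ 2.
Proof. by move=> near_k; rewrite /psi (distZ_nearest near_k) real_normK ?num_real. Qed.

(* psi lies below the parabolas at both integers k and k + 1 next to the half-integer. *)
Lemma psi_half_int_le lam k t : 0 <= lam ->
  psi lam (2^-1 + k%:~R + t) <= lam / 2 * (2^-1 - `|t|) ^+ 2.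
Proof.
move=> lam_ge0; have [t_ge0|t_lt0] := leP 0 t.
- rewrite ger0_norm // -sqrrN opprB.
  have -> : t - 2^-1 = 2^-1 + k%:~R + t - (k + 1)%:~R by rewrite intrD; field.
  exact: psi_le_parabola.
- rewrite ltr0_norm // opprK.
  have -> : 2^-1 + t = 2^-1 + k%:~R + t - k%:~R by ring.
  exact: psi_le_parabola.
Qed.

Definition second_diff lam a t := psi lam (a + t) + psi lam (a - t) - 2 * psi lam a.

Lemma second_diff_le lam a t : 0 <= lam -> second_diff lam a t <= lam * t ^+ 2.
Proof.
move=> lam_ge0; have [k near_k] := nearest_int a.
have := psi_le_parabola (a + t) k lam_ge0; have := psi_le_parabola (a - t) k lam_ge0.
rewrite /second_diff (psi_nearest lam near_k); nra.
Qed.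

Lemma second_diff_half_int lam k t : 0 <= lam ->
  second_diff lam (2^-1 + k%:~R) t <= lam * (t ^+ 2 - `|t|).
Proof.
move=> lam_ge0; rewrite /second_diff (psi_nearest lam (r := 2^-1 + k%:~R) (k := k)); last first.
  by rewrite addrK ger0_norm //; lra.
have := psi_half_int_le k t lam_ge0; have := psi_half_int_le k (- t) lam_ge0.
rewrite normrN -(real_normK (num_real t)); nra.
Qed.

End Potential.

Section SecondDerivative.
Variable R : realType.
Implicit Types (lam a c d r x : R) (k : int).

Lemma near_dist_lt a c d : `|a - c| < d -> \forall r \near a, `|r - c| < d.
Proof.
move=> lt_d; apply/nbhs_ballP; exists (d - `|a - c|) => /=; first by rewrite subr_gt0.
move=> r; rewrite /ball /= => near_a.
have : `|r - c| <= `|a - r| + `|a - c|.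
  rewrite (_ : r - c = (a - c) - (a - r)); last by ring.
  by rewrite [X in _ <= X]addrC ler_normB.
lra.
Qed.

Lemma derive1_parabola lam c x :
  derive1 (fun r => lam / 2 * (r - c) ^+ 2) x = lam * (x - c).
Proof. by rewrite derive1E derive_val /GRing.scale /=; field. Qed.

Lemma derive1_affine lam c x : derive1 (fun r => lam * (r - c)) x = lam.
Proof. by rewrite derive1E derive_val /GRing.scale /=; field. Qed.

Lemma psi_near_parabola lam x k : `|x - k%:~R| < 2^-1 ->
  \forall r \near x, psi lam r = lam / 2 * (r - k%:~R) ^+ 2.
Proof.
move=> near_k; near=> r; apply: psi_nearest; apply: ltW.
by near: r; exact: near_dist_lt.
Unshelve. all: by end_near.
Qed.

Lemma psi2_off_half_int lam a : ~ (exists k, a = 2^-1 + k%:~R) -> psi2 lam a = lam.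
Proof.
move=> not_half; have [k near_k] := nearest_int a.
have {}near_k : `|a - k%:~R| < 2^-1.
  rewrite lt_neqAle near_k andbT; apply/negP => /eqP half; apply: not_half; move: half.
  have [ak_ge0 | ak_lt0] := leP 0 (a - k%:~R).
    by rewrite ger0_norm // => ?; exists k; lra.
  by rewrite ltr0_norm // => ?; exists (k - 1); rewrite intrB; lra.
rewrite /psi2 -[RHS](derive1_affine lam k%:~R a) !derive1E; apply: near_eq_derive.
near=> r; rewrite -[RHS](derive1_parabola lam k%:~R r) !derive1E; apply: near_eq_derive.
have near_r : `|r - k%:~R| < 2^-1 by near: r; exact: near_dist_lt.
by apply: filterS (psi_near_parabola lam near_r) => s ->.
Unshelve. all: by end_near.
Qed.

End SecondDerivative.

Section FiniteSums.
Variables (R : realType) (T : choiceType).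

Lemma sum_le_size_mul (r : seq T) (P : pred T) (F : T -> R) (c : R) :
  0 <= c -> (forall i, F i <= c) -> \sum_(i <- r | P i) F i <= (size r)%:R * c.
Proof.
move=> c_ge0 F_le; apply: le_trans (ler_sum _ (fun i _ => F_le i)) _.
rewrite big_const_seq iter_addr_0 mulr_natl.
by apply: ler_wpMn2l => //; exact: count_size.
Qed.

Lemma esumZl (A : set T) (c : R) (f : T -> R) : 0 < c ->
  \esum_(i in A) (c * f i)%:E = (c%:E * \esum_(i in A) (f i)%:E)%E.
Proof.
move=> c_gt0; rewrite /esum -ereal_sup_pZl //; congr ereal_sup.
rewrite image_comp; apply: eq_imagel => B [finB _] /=.
by rewrite !fsumEFin // -EFinM mulr_fsumr.
Qed.

Variables (A : set T) (r : seq T).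
Hypotheses (r_uniq : uniq r) (r_sub : forall i, i \in r -> A i).

Lemma fsbig_finite_support (F : T -> R) : (forall i, A i -> i \notin r -> F i = 0) ->
  \sum_(i \in A) F i = \sum_(i <- r) F i.
Proof.
move=> F_out; rewrite (fsbigE r) // big_seq_cond [RHS]big_seq_cond.
by apply: eq_bigl => i; case: (boolP (i \in r)) => // /r_sub /mem_set ->.
Qed.

Lemma esum_finite_support (F : T -> R) : (forall i, A i -> i \notin r -> F i = 0) ->
  (forall i, 0 <= F i) -> \esum_(i in A) (F i)%:E = (\sum_(i <- r) F i)%:E.
Proof.
move=> F_out F_ge0; rewrite esum_mkcond.
rewrite (eq_esum (b := fun i => if i \in [set` r] then (F i)%:E else 0%E)); last first.
  move=> i _; rewrite mem_setE /=; case: (boolP (i \in r)) => [i_r|i_r].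
    by rewrite mem_set //; apply: r_sub.
  by case: ifP => // /set_mem A_i; rewrite F_out.
rewrite -esum_mkcond esum_fset; last 2 first.
- exact: finite_seq.
- by move=> i _; rewrite lee_fin.
by rewrite -sumEFin (fsbig_seq _ _ r_uniq).
Qed.

End FiniteSums.

Section Lattice.
Variable R : realType.
Implicit Types (x y z : site) (b : bond).

Lemma sdistC x y : sdist R x y = sdist R y x.
Proof. by rewrite /sdist -(sqrrN (pos1 R x - _)) -(sqrrN (pos2 R x - _)) !opprB. Qed.

Lemma sdistxx x : sdist R x x = 0.
Proof. by rewrite /sdist !subrr expr0n /= addr0 sqrtr0. Qed.

Lemma sqr_sdist x y :
  sdist R x y ^+ 2 = (pos1 R y - pos1 R x) ^+ 2 + (pos2 R y - pos2 R x) ^+ 2.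
Proof. by rewrite /sdist sqr_sqrtr // addr_ge0 ?sqr_ge0. Qed.

Lemma bond_coord_le1 b : bonds R b ->
  `|pos1 R b.2 - pos1 R b.1| <= 1 /\ `|pos2 R b.2 - pos2 R b.1| <= 1.
Proof.
move=> /(congr1 (fun d => d ^+ 2)); rewrite sqr_sdist expr1n => unit_len.
have sqr_le1 (d : R) : d ^+ 2 <= 1 -> `|d| <= 1.
  by move=> ?; rewrite -(ler_pXn2r (n := 2)) ?nnegrE // real_normK ?num_real // expr1n.
split; apply: sqr_le1.
- by have := sqr_ge0 (pos2 R b.2 - pos2 R b.1); lra.
- by have := sqr_ge0 (pos1 R b.2 - pos1 R b.1); lra.
Qed.

Lemma bond_int_eq x y : sdist R x y = 1 ->
  (2 * (y.1 - x.1) + (y.2 - x.2)) ^+ 2 + 3 * (y.2 - x.2) ^+ 2 = 4 :> int.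
Proof.
move=> /(congr1 (fun d => 4 * d ^+ 2)); rewrite sqr_sdist expr1n mulr1 => unit_len.
apply: (@intr_inj R); rewrite [RHS](_ : _ = 4) // -unit_len.
have -> : pos1 R y - pos1 R x = (y.1 - x.1)%:~R + (y.2 - x.2)%:~R / 2.
  by rewrite /pos1 !intrB; field.
have -> : pos2 R y - pos2 R x = (y.2 - x.2)%:~R * (sqrt3 R / 2).
  by rewrite /pos2 intrB; field.
rewrite rmorphD !rmorphXn !rmorphM rmorphD rmorphM exprMn expr_div_n /sqrt3 sqr_sqrtr //.
by field.
Qed.

(* A superset of the six neighbours of z. *)
Definition nbr z : seq site :=
  [seq (z.1 + i, z.2 + j) | i <- [:: -1; 0; 1], j <- [:: -1; 0; 1]].
Arguments nbr : simpl never.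

Lemma bond_nbr x y : sdist R x y = 1 -> y \in nbr x.
Proof.
move/bond_int_eq; set m := y.1 - x.1; set n := y.2 - x.2 => unit_len.
have small (k : int) : -1 <= k <= 1 -> k \in [:: -1; 0; 1].
  by case/andP=> ? ?; have [->|[->|->]] : k = -1 \/ k = 0 \/ k = 1 by lia.
have n_small : -1 <= n <= 1 by apply/andP; split; nia.
have m_small : -1 <= m <= 1 by case/andP: n_small => ? ?; apply/andP; split; nia.
apply/allpairsP; exists (m, n); rewrite /= !small //.
by rewrite /m /n !subrKC; case: y {m n unit_len m_small n_small}.
Qed.

Lemma snorm_le_l1 x : snorm R x <= `|pos1 R x| + `|pos2 R x|.
Proof.
have l1_ge0 : 0 <= `|pos1 R x| + `|pos2 R x| by rewrite addr_ge0.
rewrite /snorm -(ger0_norm l1_ge0) -sqrtr_sqr ler_sqrt ?sqr_ge0 //.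
rewrite -(real_normK (num_real (pos1 R x))) -(real_normK (num_real (pos2 R x))).
by have := normr_ge0 (pos1 R x); have := normr_ge0 (pos2 R x); nra.
Qed.

Lemma snorm_le_near x z : `|pos1 R x - pos1 R z| <= 1 -> `|pos2 R x - pos2 R z| <= 1 ->
  snorm R x <= `|pos1 R z| + `|pos2 R z| + 2.
Proof.
move=> near1 near2; apply: le_trans (snorm_le_l1 x) _.
have := ler_normD (pos1 R x - pos1 R z) (pos1 R z).
have := ler_normD (pos2 R x - pos2 R z) (pos2 R z).
rewrite !subrK; lra.
Qed.

End Lattice.

Section SingleSitePerturbation.
Variable R : realType.
Implicit Types (lam t : R) (y : site -> R) (z : site) (b : bond).

Definition bump z t : site -> R := fun x => if x == z then t else 0.

Definition incidence z b : R := (b.2 == z)%:R - (b.1 == z)%:R.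

Lemma D_bump z t b : D (bump z t) b = t * incidence z b.
Proof.
rewrite /D /bump /incidence.
by case: (b.2 == z); case: (b.1 == z); rewrite /= ?subr0 ?sub0r ?mulr1 ?subrr ?mulr0 ?mulrN1.
Qed.

Lemma incidence_sqr_le1 z b : incidence z b ^+ 2 <= 1.
Proof.
by rewrite /incidence; case: (b.2 == z); case: (b.1 == z);
  rewrite /= ?subr0 ?sub0r ?subrr ?sqrrN ?expr1n ?expr0n.
Qed.

Lemma incidence_neq0 z b : incidence z b != 0 -> b.1 = z \/ b.2 = z.
Proof.
rewrite /incidence; have [|_] := eqVneq b.2 z; first by right.
by have [|_] := eqVneq b.1 z; [left | rewrite subrr eqxx].
Qed.

Lemma bond_endpoint_off_xi0 b : bonds R b -> exists z, z != xi0 /\ `|incidence z b| = 1.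
Proof.
move=> bond_b; have b12 : b.1 != b.2.
  apply/eqP => b12; move: bond_b; rewrite /bonds /= b12 sdistxx => /esym/eqP.
  by rewrite oner_eq0.
have [b2_xi0|b2_ne] := eqVneq b.2 xi0.
- exists b.1; split; first by rewrite -b2_xi0.
  by rewrite /incidence eqxx eq_sym (negbTE b12) sub0r normrN normr1.
- exists b.2; split=> //.
  by rewrite /incidence eqxx (negbTE b12) subr0 normr1.
Qed.

Definition bonds_at z : seq bond :=
  [seq b <- undup ([seq (z, s) | s <- nbr z] ++ [seq (s, z) | s <- nbr z]) | `[< bonds R b >]].

Lemma bonds_at_uniq z : uniq (bonds_at z).
Proof. by rewrite filter_uniq // undup_uniq. Qed.

Lemma bonds_at_sub z b : b \in bonds_at z -> bonds R b.
Proof. by rewrite mem_filter => /andP[/asboolP]. Qed.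

Lemma mem_bonds_at z b : bonds R b -> incidence z b != 0 -> b \in bonds_at z.
Proof.
move=> bond_b /incidence_neq0 z_end.
rewrite mem_filter mem_undup mem_cat; apply/andP; split; first exact/asboolP.
apply/orP; case: z_end => <-; [left | right]; apply/mapP.
- by exists b.2; [exact: bond_nbr bond_b | case: b bond_b].
- by exists b.1; [apply: bond_nbr; rewrite sdistC; exact: bond_b | case: b bond_b].
Qed.

Lemma incidence_notin z b : bonds R b -> b \notin bonds_at z -> incidence z b = 0.
Proof. by move=> bond_b; apply: contraNeq; exact: mem_bonds_at. Qed.

Lemma W0_bump z t : z != xi0 -> W0 (bump z t).
Proof.
move=> z_ne_xi0; split; first by rewrite /bump eq_sym (negbTE z_ne_xi0).
exists (`|pos1 R z| + `|pos2 R z| + 2) => b bond_b.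
rewrite D_bump mulf_eq0 negb_or => /andP[_ /incidence_neq0].
have [near1 near2] := bond_coord_le1 bond_b.
have z_le : snorm R z <= `|pos1 R z| + `|pos2 R z| + 2.
  by apply: snorm_le_near; rewrite subrr normr0.
case=> [b1_z|b2_z].
- by rewrite -b1_z in z_le *; split=> //; exact: snorm_le_near.
- by rewrite -b2_z in z_le *; split=> //; apply: snorm_le_near; rewrite distrC.
Qed.

Lemma Ediff_bump_sym lam y z t :
  Ediff lam y (bump z t) + Ediff lam y (bump z (- t)) =
  \sum_(b <- bonds_at z) second_diff lam (D y b) (t * incidence z b).
Proof.
have unseen s b : bonds R b -> b \notin bonds_at z ->
    psi lam (D y b + D (bump z s) b) - psi lam (D y b) = 0.
  by move=> ? ?; rewrite D_bump incidence_notin // mulr0 addr0 subrr.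
rewrite /Ediff (fsbig_finite_support (bonds_at_uniq z) (@bonds_at_sub z) (unseen t)).
rewrite (fsbig_finite_support (bonds_at_uniq z) (@bonds_at_sub z) (unseen (- t))).
rewrite -big_split /=; apply: eq_bigr => b _.
by rewrite !D_bump /second_diff mulNr; ring.
Qed.

Lemma Dnorm2_bump_le z t :
  (Dnorm2 (bump z t) <= ((size (bonds_at z))%:R * t ^+ 2)%:E)%E.
Proof.
rewrite /Dnorm2 (esum_finite_support (bonds_at_uniq z) (@bonds_at_sub z)); last 2 first.
- by move=> b ? ?; rewrite D_bump incidence_notin // mulr0 expr0n.
- by move=> b; rewrite sqr_ge0.
rewrite lee_fin; apply: sum_le_size_mul => [|b]; first exact: sqr_ge0.
by rewrite D_bump exprMn ler_piMr ?sqr_ge0 ?incidence_sqr_le1.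
Qed.

Lemma locally_stable_not_half_int lam y : 0 < lam -> locally_stable lam y ->
  forall b, bonds R b -> ~ exists k : int, D y b = 2^-1 + k%:~R.
Proof.
move=> lam_gt0 [eps [eps_gt0 stable]] b0 bond_b0 [k Dy_b0].
have lam_ge0 := ltW lam_gt0.
have [z [z_ne_xi0 inc_b0]] := bond_endpoint_off_xi0 bond_b0.
(* t <= eps / (N + 1) keeps ||D bump|| <= eps, and (N + 1) t <= 1/2 makes the energy drop. *)
pose N : R := (size (bonds_at z))%:R; pose m := Num.min eps 2^-1; pose t := m / (N + 1).
have N_ge0 : 0 <= N by rewrite ler0n.
have m_gt0 : 0 < m by rewrite lt_min eps_gt0 invr_gt0 ltr0n.
have m_le_eps : m <= eps by rewrite ge_min lexx.
have m_le_half : m <= 2^-1 by rewrite ge_min lexx orbT.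
have tN : t * (N + 1) = m by rewrite /t divfK // lt0r_neq0 // ltr_wpDl.
have t_gt0 : 0 < t by rewrite divr_gt0 // ltr_wpDl.
have stable_at s : `|s| = t -> 0 <= Ediff lam y (bump z s).
  move=> s_t; apply: stable; first exact: W0_bump.
  apply: le_trans (Dnorm2_bump_le z s) _; rewrite lee_fin -real_normK ?num_real // s_t.
  have : t <= m by rewrite -tN; nra.
  by move: tN; rewrite -/N; nra.
have := addr_ge0 (stable_at t (gtr0_norm t_gt0)) (stable_at (- t) _).
rewrite normrN gtr0_norm // => /(_ erefl).
rewrite Ediff_bump_sym (bigD1_seq b0) ?bonds_at_uniq ?mem_bonds_at //=; last first.
  by rewrite -normr_eq0 inc_b0 oner_neq0.
have b0_le : second_diff lam (D y b0) (t * incidence z b0) <= lam * (t ^+ 2 - t).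
  have := second_diff_half_int k (t * incidence z b0) lam_ge0.
  rewrite -Dy_b0 normrM inc_b0 mulr1 gtr0_norm // exprMn.
  by rewrite -(real_normK (num_real (incidence z b0))) inc_b0 expr1n mulr1.
have others_le : \sum_(b <- bonds_at z | b != b0)
    second_diff lam (D y b) (t * incidence z b) <= N * (lam * t ^+ 2).
  apply: sum_le_size_mul => [|b]; first by rewrite mulr_ge0 ?sqr_ge0.
  apply: le_trans (second_diff_le _ _ lam_ge0) _; apply: ler_wpM2l => //.
  by rewrite exprMn ler_piMr ?sqr_ge0 ?incidence_sqr_le1.
have : lam * (t ^+ 2 - t) + N * (lam * t ^+ 2) < 0.
  rewrite (_ : _ + _ = lam * t * (t * (N + 1) - 1)); last by ring.
  by rewrite tN; have := mulr_gt0 lam_gt0 t_gt0; nra.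
lra.
Qed.

End SingleSitePerturbation.

Unset Implicit Arguments.
Set Strict Implicit.

Theorem lemma3p4 (R : realType) (lam : R) (u : site -> R) :
  0 < lam ->
  W12 u ->
  locally_stable lam (fun x => yhat R x + u x) ->
  (forall b, bonds R b ->
     ~ (exists k : int, D (fun x => yhat R x + u x) b = 2^-1 + k%:~R)) /\
  (forall v : site -> R, W12 v ->
     (lam%:E * Dnorm2 v <=
      \esum_(b in bonds R)
        (psi2 lam (D (fun x => yhat R x + u x) b) * (D v b) ^+ 2)%:E)%E).
Proof.
move=> lam_gt0 _ stable.
have not_half := locally_stable_not_half_int lam_gt0 stable.
split=> // v _.
rewrite (eq_esum (b := fun b => (lam * D v b ^+ 2)%:E)) ?esumZl //.
by move=> b bond_b; rewrite psi2_off_half_int //; exact: not_half.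
Qed.
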